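(* Let $f_1,\dots,f_n\colon\mathbb R\to\mathbb R$ and $\eta\colon\mathbb R\times\mathbb R\to(0,\infty)$ be smooth with $\eta(x,0)=1$, and consider the metric $(\star)$ on $\mathbb R^{n+2}$, whose scalar curvature is $-2\eta_{uu}/\eta$. If $\mathrm{Scal}\le-2$ everywhere and $|\eta_u(x,0)|\le1$ for all $x$, then the metric is complete.
   Context: The metric $(\star)$: on $\mathbb R\times\mathbb R^{n+1}$ with coordinates $(x,u,v_1,\dots,v_n)$, conventions $v_0=u$, $v_{-1}=v_{n+1}=0$, $f_0=f_{n+1}=0$, $g_{\eta,f}=\eta(x,u)^2dx^2+\sum_{j=0}^n\big(dv_j+(v_{j-1}f_j(x)-v_{j+1}f_{j+1}(x))dx\big)^2$. $|\eta_u(x,0)|$ is the absolute geodesic curvature of $\gamma(x)=(x,0,\dots,0)$. *)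

From Stdlib Require Import Reals Lra.
From Coquelicot Require Import Coquelicot.
Open Scope R_scope.

Definition smooth1 (g : R -> R) : Prop :=
  forall (k : nat) (x : R), ex_derive_n g k x.

(* Iterated partial derivatives of a function of two variables (x,u):
   [true] = d/dx, [false] = d/du; the list is applied right-to-left. *)
Fixpoint dpart (l : list bool) (h : R -> R -> R) : R -> R -> R :=
  match l with
  | nil => h
  | cons b l' =>
      let g := dpart l' h in
      if b then (fun x u => Derive (fun x' => g x' u) x)
      else (fun x u => Derive (fun u' => g x u') u)
  end.

Definition smooth2 (h : R -> R -> R) : Prop :=
  forall (l : list bool) (x u : R),
    continuous (fun p : R * R => dpart l h (fst p) (snd p)) (x, u) /\
    ex_derive (fun x' => dpart l h x' u) x /\
    ex_derive (fun u' => dpart l h x u') u.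

Definition eta_u (eta : R -> R -> R) (x u : R) : R :=
  Derive (fun u' => eta x u') u.
Definition eta_uu (eta : R -> R -> R) (x u : R) : R :=
  Derive (fun u' => eta_u eta x u') u.

(* Points of R x R^{n+1}: (x, v) with v 0 = u, v j = v_j for 1 <= j <= n;
   entries v j for j > n are ignored. *)
Definition Pt := (R * (nat -> R))%type.

(* Conventions: f_0 = f_{n+1} = 0, v_{-1} = v_{n+1} = 0. *)
Definition fz (n : nat) (f : nat -> R -> R) (j : nat) (x : R) : R :=
  if Nat.eqb j 0 then 0 else if Nat.leb j n then f j x else 0.
Definition vz (n : nat) (v : nat -> R) (j : nat) : R :=
  if Nat.leb j n then v j else 0.

Definition coef (n : nat) (f : nat -> R -> R) (x : R) (v : nat -> R) (j : nat) : R :=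
  (match j with O => 0 | S k => vz n v k * fz n f j x end)
  - vz n v (S j) * fz n f (S j) x.

Definition gform (n : nat) (eta : R -> R -> R) (f : nat -> R -> R)
    (x : R) (v : nat -> R) (wx : R) (w : nat -> R) : R :=
  (eta x (v O))^2 * wx^2
  + sum_f_R0 (fun j => (w j + coef n f x v j * wx)^2) n.

Definition C1 (c : R -> R) : Prop :=
  forall t, ex_derive c t /\ continuous (Derive c) t.

Definition curve_from_to (n : nat) (cx : R -> R) (cv : nat -> R -> R) (p q : Pt) : Prop :=
  C1 cx /\ (forall j, (j <= n)%nat -> C1 (cv j)) /\
  cx 0 = fst p /\ (forall j, (j <= n)%nat -> cv j 0 = snd p j) /\
  cx 1 = fst q /\ (forall j, (j <= n)%nat -> cv j 1 = snd q j).

Definition curve_length (n : nat) (eta : R -> R -> R) (f : nat -> R -> R)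
    (cx : R -> R) (cv : nat -> R -> R) : R :=
  RInt (fun t => sqrt (gform n eta f (cx t) (fun j => cv j t)
                          (Derive cx t) (fun j => Derive (cv j) t))) 0 1.

Definition rdist (n : nat) (eta : R -> R -> R) (f : nat -> R -> R) (p q : Pt) : Rbar :=
  Glb_Rbar (fun L => exists cx cv, curve_from_to n cx cv p q /\
                                   L = curve_length n eta f cx cv).

Definition rcauchy (n : nat) eta f (P : nat -> Pt) : Prop :=
  forall eps : R, 0 < eps -> exists N : nat, forall k m : nat,
    (N <= k)%nat -> (N <= m)%nat -> Rbar_lt (rdist n eta f (P k) (P m)) eps.

Definition rconverges (n : nat) eta f (P : nat -> Pt) (p : Pt) : Prop :=
  forall eps : R, 0 < eps -> exists N : nat, forall k : nat,
    (N <= k)%nat -> Rbar_lt (rdist n eta f (P k) p) eps.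

Definition metric_complete (n : nat) (eta : R -> R -> R) (f : nat -> R -> R) : Prop :=
  forall P : nat -> Pt, rcauchy n eta f P -> exists p : Pt, rconverges n eta f P p.

From Pilot Require Import Defs.
From Stdlib Require Import Reals.
From Coquelicot Require Import Coquelicot.
From Stdlib Require Import Lra Lia Classical.
Open Scope R_scope.

(** Scal = -2 eta_uu / eta <= -2 says eta_uu >= eta; with eta(x,0) = 1 and
    |eta_u(x,0)| <= 1, comparison with the ODE h'' = h gives eta(x,u) >= exp(-|u|).
    The connection coefficients c_j = v_{j-1} f_j - v_{j+1} f_{j+1} satisfy
    sum_j v_j c_j = 0, so along a curve of length L the bracket
    <v> = sqrt(1 + |v|^2) changes by at most (n+1) L.  Hence along such a curve
    eta >= exp(-B), B = <v(start)> + (n+1) L, so the base coordinate moves by at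
    most exp(B) L, and then the fibre coordinates move by O(L) as well. *)

Lemma le_of_derive_nonneg (h dh : R -> R) (a b : R) : a <= b ->
  (forall t, a <= t <= b -> is_derive h t (dh t)) ->
  (forall t, a <= t <= b -> 0 <= dh t) -> h a <= h b.
Proof.
  intros hab Hd Hp.
  destruct (MVT_gen h a b dh) as [c [Hc E]].
  - intros x Hx. rewrite Rmin_left, Rmax_right in Hx by lra. apply Hd; lra.
  - intros x Hx. rewrite Rmin_left, Rmax_right in Hx by lra.
    apply continuity_pt_filterlim, (@ex_derive_continuous R_AbsRing R_NormedModule).
    eexists; apply Hd; lra.
  - rewrite Rmin_left, Rmax_right in Hc by lra.
    assert (0 <= dh c * (b - a)) by (apply Rmult_le_pos; [apply Hp|]; lra). lra.
Qed.

Lemma is_derive_RInt_0 (g : R -> R) (t : R) : (forall s, continuous g s) ->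
  is_derive (fun s => RInt g 0 s) t (g t).
Proof.
  intros Hg. apply (is_derive_RInt g (fun s => RInt g 0 s) 0 t); [|apply Hg].
  apply filter_forall. intros b. apply (RInt_correct (V:=R_CompleteNormedModule)).
  apply ex_RInt_continuous. intros; apply Hg.
Qed.

(** This turns a pointwise speed bound
    along a curve into a displacement bound in terms of its length. *)
Lemma displacement_le_integral (F dF g : R -> R) (K : R) : 0 <= K ->
  (forall t, 0 <= t <= 1 -> is_derive F t (dF t)) ->
  (forall t, 0 <= t <= 1 -> Rabs (dF t) <= K * g t) ->
  (forall t, continuous g t) -> (forall t, 0 <= g t) ->
  forall s, 0 <= s <= 1 -> Rabs (F s - F 0) <= K * RInt g 0 1.
Proof.
  intros HK HF Hb Hg Hg0 s Hs.
  set (G := fun s => RInt g 0 s).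
  assert (HG : forall t, is_derive G t (g t)) by (intros; apply is_derive_RInt_0; auto).
  assert (G0 : G 0 = 0) by (unfold G; rewrite RInt_point; reflexivity).
  assert (Gs : G s <= G 1).
  { apply (le_of_derive_nonneg G g s 1); [lra | intros; apply HG | intros; apply Hg0]. }
  assert (Hbt : forall t, 0 <= t <= s -> - (K * g t) <= dF t <= K * g t).
  { intros t Ht. apply Rabs_le_between, Hb; lra. }
  assert (Hlo : K * G 0 - F 0 <= K * G s - F s).
  { apply (le_of_derive_nonneg (fun t => K * G t - F t) (fun t => K * g t - dF t) 0 s); [lra | |].
    - intros t Ht. apply (is_derive_minus (fun t => K * G t) F).
      + apply (is_derive_scal G t K (g t)), HG.
      + apply HF; lra.
    - intros t Ht. specialize (Hbt t Ht). lra. }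
  assert (Hhi : K * G 0 + F 0 <= K * G s + F s).
  { apply (le_of_derive_nonneg (fun t => K * G t + F t) (fun t => K * g t + dF t) 0 s); [lra | |].
    - intros t Ht. apply (is_derive_plus (fun t => K * G t) F).
      + apply (is_derive_scal G t K (g t)), HG.
      + apply HF; lra.
    - intros t Ht. specialize (Hbt t Ht). lra. }
  rewrite G0 in Hlo, Hhi. fold (G 1).
  assert (K * G s <= K * G 1) by (apply Rmult_le_compat_l; lra).
  apply Rabs_le_between. lra.
Qed.

Lemma RInt_01_le (g : R -> R) (M : R) : (forall t, continuous g t) ->
  (forall t, 0 <= t <= 1 -> g t <= M) -> RInt g 0 1 <= M.
Proof.
  intros Hc HM.
  replace M with (RInt (fun _ => M) 0 1)
    by (rewrite RInt_const; unfold scal; simpl; unfold mult; simpl; ring).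
  apply RInt_le; [lra | | apply (ex_RInt_const (V:=R_NormedModule)) | intros; apply HM; lra].
  apply (ex_RInt_continuous (V:=R_CompleteNormedModule)); auto.
Qed.

Lemma is_derive_sum_f_R0 (h dh : nat -> R -> R) (m : nat) (t : R) :
  (forall j, (j <= m)%nat -> is_derive (h j) t (dh j t)) ->
  is_derive (fun t => sum_f_R0 (fun j => h j t) m) t (sum_f_R0 (fun j => dh j t) m).
Proof.
  induction m; intros H; simpl; [apply H; lia|].
  apply (is_derive_plus (fun t => sum_f_R0 (fun j => h j t) m) (h (S m)));
    [apply IHm; intros; apply H | apply H]; lia.
Qed.

Lemma term_le_sum (a : nat -> R) (m j : nat) :
  (forall i, 0 <= a i) -> (j <= m)%nat -> a j <= sum_f_R0 a m.
Proof.
  intros H; induction m; intros Hj; simpl.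
  - replace j with 0%nat by lia; lra.
  - destruct (Nat.eq_dec j (S m)) as [->|].
    + pose proof (cond_pos_sum a m H); lra.
    + pose proof (IHm ltac:(lia)). specialize (H (S m)); lra.
Qed.

Lemma sum_telescoping (a : nat -> R) (m : nat) :
  sum_f_R0 (fun j => a j - a (S j)) m = a 0%nat - a (S m).
Proof. induction m; simpl; auto. rewrite IHm; ring. Qed.

Lemma sqrt_pow2_abs (x : R) : sqrt (x ^ 2) = Rabs x.
Proof. rewrite <- sqrt_Rsqr_abs. f_equal. unfold Rsqr; ring. Qed.

Lemma pow2_le_of_abs_le (a b : R) : Rabs a <= b -> a ^ 2 <= b ^ 2.
Proof. intros H. rewrite <- (pow2_abs a). pose proof (Rabs_pos a). nra. Qed.

Lemma exp_opp_mul_exp (t : R) : exp (- t) * exp t = 1.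
Proof. rewrite <- exp_plus, Rplus_opp_l. apply exp_0. Qed.

Lemma exp_le_of_le (a b : R) : a <= b -> exp a <= exp b.
Proof. intros [H | ->]; [left; apply exp_increasing, H | lra]. Qed.

(** Comparison for the ODE h'' = h: a supersolution (h'' >= h) with h(0) = 1 and
    |h'(0)| <= 1 dominates exp(-u) for u >= 0. Indeed e^{-t}(h' + h) is
    nondecreasing and nonnegative at 0, hence so is the derivative of e^t h. *)
Lemma exp_opp_le_supersolution (h h1 h2 : R -> R) :
  (forall u, is_derive h u (h1 u)) -> (forall u, is_derive h1 u (h2 u)) ->
  (forall u, h u <= h2 u) -> h 0 = 1 -> Rabs (h1 0) <= 1 ->
  forall u, 0 <= u -> exp (- u) <= h u.
Proof.
  intros D1 D2 Hsup H0 Hd0 u Hu.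
  set (k := fun t => exp (- t) * (h1 t + h t)).
  assert (Hk : forall t, 0 <= t -> 0 <= k t).
  { intros t Ht.
    assert (Hmono : k 0 <= k t).
    { apply (le_of_derive_nonneg k (fun t => exp (- t) * (h2 t - h t)) 0 t Ht).
      - intros s _. unfold k.
        assert (E : exp (- s) * (h2 s - h s)
                    = - exp (- s) * (h1 s + h s) + exp (- s) * (h2 s + h1 s)) by ring.
        rewrite E. apply (is_derive_mult (fun t => exp (- t)) (fun t => h1 t + h t));
          [auto_derive; auto; ring | apply (is_derive_plus h1 h); auto | intros; apply Rmult_comm].
      - intros s _. apply Rmult_le_pos; [left; apply exp_pos | specialize (Hsup s); lra]. }
    unfold k at 1 in Hmono. rewrite Ropp_0, exp_0, H0 in Hmono.
    apply Rabs_le_between in Hd0. lra. }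
  assert (Hgrow : exp 0 * h 0 <= exp u * h u).
  { apply (le_of_derive_nonneg (fun t => exp t * h t) (fun t => exp t * exp t * k t) 0 u Hu).
    - intros s _. unfold k.
      assert (E : exp s * exp s * (exp (- s) * (h1 s + h s))
                  = (exp (- s) * exp s) * (exp s * h s + exp s * h1 s)) by ring.
      rewrite E, exp_opp_mul_exp, Rmult_1_l.
      apply (is_derive_mult exp h); [apply is_derive_exp | auto | intros; apply Rmult_comm].
    - intros s Hs. apply Rmult_le_pos; [left; apply Rmult_lt_0_compat; apply exp_pos|].
      apply Hk; lra. }
  rewrite exp_0, H0, Rmult_1_l in Hgrow.
  replace (h u) with (exp (- u) * (exp u * h u))
    by (rewrite <- Rmult_assoc, exp_opp_mul_exp; ring).
  rewrite <- (Rmult_1_r (exp (- u))) at 1.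
  apply Rmult_le_compat_l; [left; apply exp_pos | exact Hgrow].
Qed.

(** Two-sided version, obtained by applying the previous lemma to u |-> h(-u). *)
Lemma exp_opp_abs_le_supersolution (h h1 h2 : R -> R) :
  (forall u, is_derive h u (h1 u)) -> (forall u, is_derive h1 u (h2 u)) ->
  (forall u, h u <= h2 u) -> h 0 = 1 -> Rabs (h1 0) <= 1 ->
  forall u, exp (- Rabs u) <= h u.
Proof.
  intros D1 D2 Hsup H0 Hd0 u.
  destruct (Rle_dec 0 u) as [Hu | Hu].
  - rewrite Rabs_pos_eq by lra. apply (exp_opp_le_supersolution h h1 h2); auto.
  - rewrite Rabs_left by lra.
    replace (h u) with (h (- - u)) by (rewrite Ropp_involutive; reflexivity).
    apply (exp_opp_le_supersolution (fun t => h (- t)) (fun t => - h1 (- t))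
                                     (fun t => h2 (- t))); try lra.
    + intros t.
      replace (- h1 (- t)) with (scal (-1) (h1 (- t)))
        by (unfold scal; simpl; unfold mult; simpl; ring).
      apply (is_derive_comp h (fun t => - t)); [apply D1 | auto_derive; auto].
    + intros t.
      replace (h2 (- t)) with (- scal (-1) (h2 (- t)))
        by (unfold scal; simpl; unfold mult; simpl; ring).
      apply (is_derive_opp (fun t => h1 (- t))).
      apply (is_derive_comp h1 (fun t => - t)); [apply D2 | auto_derive; auto].
    + intros t; apply Hsup.
    + rewrite Ropp_0; exact H0.
    + rewrite Ropp_0, Rabs_Ropp; exact Hd0.
Qed.

Section WarpingLowerBound.
Variable eta : R -> R -> R.
Hypothesis eta_smooth : smooth2 eta.
Hypothesis eta_pos : forall x u, 0 < eta x u.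
Hypothesis eta_axis : forall x, eta x 0 = 1.
Hypothesis scal_le : forall x u : R, -2 * eta_uu eta x u / eta x u <= -2.
Hypothesis curvature_axis : forall x : R, Rabs (eta_u eta x 0) <= 1.

Lemma eta_is_derive_u (x u : R) : is_derive (fun u => eta x u) u (eta_u eta x u).
Proof. destruct (eta_smooth nil x u) as [_ [_ H]]. apply Derive_correct, H. Qed.

Lemma eta_u_is_derive_u (x u : R) : is_derive (fun u => eta_u eta x u) u (eta_uu eta x u).
Proof. destruct (eta_smooth (cons false nil) x u) as [_ [_ H]]. apply Derive_correct, H. Qed.

Lemma eta_le_eta_uu (x u : R) : eta x u <= eta_uu eta x u.
Proof.
  specialize (scal_le x u). specialize (eta_pos x u).
  assert (E : -2 * eta_uu eta x u / eta x u * eta x u = -2 * eta_uu eta x u) by (field; lra).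
  assert (-2 * eta_uu eta x u / eta x u * eta x u <= -2 * eta x u)
    by (apply Rmult_le_compat_r; lra). lra.
Qed.

Lemma eta_lower_bound (x u : R) : exp (- Rabs u) <= eta x u.
Proof.
  apply (exp_opp_abs_le_supersolution (fun u => eta x u) (fun u => eta_u eta x u)
           (fun u => eta_uu eta x u)); auto using eta_is_derive_u, eta_u_is_derive_u,
                                              eta_le_eta_uu.
Qed.
End WarpingLowerBound.

(** Continuity bookkeeping for real functions (fixing Coquelicot's implicit spaces). *)

Lemma continuous_plus_R (g h : R -> R) x :
  continuous g x -> continuous h x -> continuous (fun t => g t + h t) x.
Proof. intros; apply (continuous_plus g h x); auto. Qed.
Lemma continuous_mult_R (g h : R -> R) x :
  continuous g x -> continuous h x -> continuous (fun t => g t * h t) x.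
Proof. intros; apply (continuous_mult g h x); auto. Qed.
Lemma continuous_const_R (c : R) x : continuous (fun _ : R => c) x.
Proof. apply (continuous_const (U:=R_UniformSpace) (V:=R_UniformSpace)). Qed.
Lemma continuous_sqr_R (g : R -> R) x : continuous g x -> continuous (fun t => g t ^ 2) x.
Proof.
  intros. apply (continuous_ext (fun t => g t * (g t * 1))); [intros; simpl; ring|].
  apply continuous_mult_R; [|apply continuous_mult_R]; auto using continuous_const_R.
Qed.
Lemma continuous_sum_R (h : nat -> R -> R) m x :
  (forall j, (j <= m)%nat -> continuous (h j) x) ->
  continuous (fun t => sum_f_R0 (fun j => h j t) m) x.
Proof.
  induction m; intros H; simpl; [apply H; lia|].
  apply continuous_plus_R; [apply IHm; intros; apply H | apply H]; lia.
Qed.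
Lemma continuous_of_derive_R (g : R -> R) x : ex_derive g x -> continuous g x.
Proof. apply (@ex_derive_continuous R_AbsRing R_NormedModule). Qed.

Section DensityContinuity.
Variable n : nat.
Variable f : nat -> R -> R.
Variable eta : R -> R -> R.
Hypothesis f_smooth : forall j : nat, (1 <= j <= n)%nat -> smooth1 (f j).
Hypothesis eta_smooth : smooth2 eta.

Lemma fz_continuous (j : nat) (y : R) : continuous (fz n f j) y.
Proof.
  unfold fz. destruct (Nat.eqb j 0) eqn:E1; [apply continuous_const_R|].
  destruct (Nat.leb j n) eqn:E2; [|apply continuous_const_R].
  apply Nat.eqb_neq in E1. apply Nat.leb_le in E2.
  apply continuous_of_derive_R. exact (f_smooth j ltac:(lia) 1%nat y).
Qed.

Lemma coef_continuous (cx : R -> R) (cv : nat -> R -> R) j t : continuous cx t ->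
  (forall j, (j <= n)%nat -> continuous (cv j) t) ->
  continuous (fun t => coef n f (cx t) (fun j => cv j t) j) t.
Proof.
  intros Hx Hv.
  assert (Hvz : forall k, continuous (fun t => vz n (fun j => cv j t) k) t).
  { intros k. unfold vz. destruct (Nat.leb k n) eqn:E; [|apply continuous_const_R].
    apply Nat.leb_le in E. apply Hv, E. }
  assert (Hfz : forall k, continuous (fun t => fz n f k (cx t)) t).
  { intros k. apply (continuous_comp cx (fz n f k)); auto using fz_continuous. }
  unfold coef. apply (continuous_minus (V:=R_NormedModule)).
  - destruct j; [apply continuous_const_R | apply continuous_mult_R; auto].
  - apply continuous_mult_R; auto.
Qed.

Definition length_density (cx : R -> R) (cv : nat -> R -> R) (t : R) : R :=
  sqrt (gform n eta f (cx t) (fun j => cv j t) (Derive cx t) (fun j => Derive (cv j) t)).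

Lemma length_density_continuous cx cv t : Defs.C1 cx -> (forall j, (j <= n)%nat -> Defs.C1 (cv j)) ->
  continuous (length_density cx cv) t.
Proof.
  intros Hx Hv. unfold length_density. apply continuous_sqrt_comp. unfold gform.
  assert (Cx : continuous cx t) by (apply continuous_of_derive_R, Hx).
  assert (Cv : forall j, (j <= n)%nat -> continuous (cv j) t)
    by (intros; apply continuous_of_derive_R, Hv; auto).
  apply continuous_plus_R.
  - apply continuous_mult_R; apply continuous_sqr_R; [|apply Hx].
    apply (continuous_comp_2 cx (cv 0%nat) eta t Cx (Cv 0%nat ltac:(lia))).
    exact (proj1 (eta_smooth nil (cx t) (cv 0%nat t))).
  - apply (continuous_sum_R
      (fun j t => (Derive (cv j) t + coef n f (cx t) (fun j => cv j t) j * Derive cx t) ^ 2)).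
    intros j Hj. apply continuous_sqr_R, continuous_plus_R; [apply Hv; auto|].
    apply continuous_mult_R; [apply coef_continuous; auto | apply Hx].
Qed.
End DensityContinuity.

Section MetricAlgebra.
Variable n : nat.
Variable f : nat -> R -> R.
Variable eta : R -> R -> R.

Definition bracket (v : nat -> R) : R := sqrt (1 + sum_f_R0 (fun j => v j ^ 2) n).

Lemma bracket_sq_ge1 (v : nat -> R) : 1 <= 1 + sum_f_R0 (fun j => v j ^ 2) n.
Proof. pose proof (cond_pos_sum (fun j => v j ^ 2) n (fun i => pow2_ge_0 _)). lra. Qed.

Lemma bracket_ge1 (v : nat -> R) : 1 <= bracket v.
Proof. unfold bracket. rewrite <- sqrt_1 at 1. apply sqrt_le_1_alt, bracket_sq_ge1. Qed.

Lemma bracket_ext (v w : nat -> R) :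
  (forall j, (j <= n)%nat -> v j = w j) -> bracket v = bracket w.
Proof. intros H. unfold bracket. do 2 f_equal. apply sum_eq. intros; rewrite H; auto. Qed.

Lemma abs_le_bracket (v : nat -> R) (j : nat) : (j <= n)%nat -> Rabs (v j) <= bracket v.
Proof.
  intros Hj. rewrite <- sqrt_pow2_abs. unfold bracket. apply sqrt_le_1_alt.
  pose proof (term_le_sum (fun j => v j ^ 2) n j (fun i => pow2_ge_0 _) Hj). lra.
Qed.

Lemma vz_abs_le_bracket (v : nat -> R) (k : nat) : Rabs (vz n v k) <= bracket v.
Proof.
  unfold vz. destruct (Nat.leb k n) eqn:E.
  - apply abs_le_bracket, Nat.leb_le, E.
  - rewrite Rabs_R0. pose proof (bracket_ge1 v); lra.
Qed.

(** The connection coefficients are skew: the vector (coef_j)_j is orthogonal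
    to v (a telescoping sum). Hence d<v>/dt only involves the components
    v_j' + coef_j x', which are controlled by the g-speed. *)
Lemma coef_orthogonal (x : R) (v : nat -> R) :
  sum_f_R0 (fun j => v j * coef n f x v j) n = 0.
Proof.
  set (a := fun j => match j with 0%nat => 0 | S k => vz n v k * vz n v j * fz n f j x end).
  rewrite (sum_eq _ (fun j => a j - a (S j))).
  - rewrite sum_telescoping. unfold a. unfold vz at 2.
    rewrite (proj2 (Nat.leb_gt (S n) n)) by lia. ring.
  - intros i Hi. unfold a, coef. replace (v i) with (vz n v i).
    + destruct i; ring.
    + unfold vz. rewrite (proj2 (Nat.leb_le i n)) by lia. reflexivity.
Qed.

Lemma coef_abs_le (x : R) (v : nat -> R) (j : nat) (V Fm : R) :
  (forall k, Rabs (vz n v k) <= V) -> (forall i, Rabs (fz n f i x) <= Fm) ->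
  Rabs (coef n f x v j) <= 2 * V * Fm.
Proof.
  intros HV HF.
  assert (Hb : forall k i, Rabs (vz n v k * fz n f i x) <= V * Fm).
  { intros k i. rewrite Rabs_mult. apply Rmult_le_compat; auto using Rabs_pos. }
  assert (Hfirst : Rabs (match j with 0%nat => 0 | S k => vz n v k * fz n f j x end) <= V * Fm).
  { destruct j; [|apply Hb]. rewrite Rabs_R0. apply (Rle_trans _ _ _ (Rabs_pos _) (Hb 0%nat 0%nat)). }
  unfold coef, Rminus. eapply Rle_trans; [apply Rabs_triang|]. rewrite Rabs_Ropp.
  pose proof (Hb (S j) (S j)). lra.
Qed.

Lemma fibre_speed_le (x : R) (v : nat -> R) (wx : R) (w : nat -> R) (j : nat) : (j <= n)%nat ->
  Rabs (w j + coef n f x v j * wx) <= sqrt (gform n eta f x v wx w).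
Proof.
  intros Hj. rewrite <- sqrt_pow2_abs. apply sqrt_le_1_alt. unfold gform.
  pose proof (term_le_sum (fun j => (w j + coef n f x v j * wx) ^ 2) n j
                (fun i => pow2_ge_0 _) Hj).
  assert (0 <= (eta x (v 0%nat)) ^ 2 * wx ^ 2) by (apply Rmult_le_pos; apply pow2_ge_0). lra.
Qed.

Lemma base_speed_le (x : R) (v : nat -> R) (wx : R) (w : nat -> R) :
  Rabs (eta x (v 0%nat)) * Rabs wx <= sqrt (gform n eta f x v wx w).
Proof.
  rewrite <- !sqrt_pow2_abs, <- sqrt_mult_alt by apply pow2_ge_0.
  apply sqrt_le_1_alt. unfold gform.
  pose proof (cond_pos_sum (fun j => (w j + coef n f x v j * wx) ^ 2) n (fun i => pow2_ge_0 _)).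
  lra.
Qed.

Lemma speed_le_of_components (x : R) (v : nat -> R) (wx : R) (w : nat -> R) (A b : R) :
  0 <= A -> 0 <= b -> Rabs (eta x (v 0%nat)) * Rabs wx <= A ->
  (forall j, (j <= n)%nat -> Rabs (w j + coef n f x v j * wx) <= b) ->
  sqrt (gform n eta f x v wx w) <= A + INR (S n) * b.
Proof.
  intros HA Hb Hbase Hfib.
  assert (HN : 1 <= INR (S n)) by (apply (le_INR 1); lia).
  assert (Hsum : sum_f_R0 (fun j => (w j + coef n f x v j * wx) ^ 2) n <= INR (S n) * b ^ 2).
  { rewrite Rmult_comm, <- sum_cte. apply sum_Rle. intros j Hj.
    apply pow2_le_of_abs_le, Hfib, Hj. }
  assert (Hx : (eta x (v 0%nat)) ^ 2 * wx ^ 2 <= A ^ 2).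
  { rewrite <- Rpow_mult_distr. apply pow2_le_of_abs_le. rewrite Rabs_mult. exact Hbase. }
  rewrite <- (Rabs_pos_eq (A + INR (S n) * b)) by (pose proof (Rmult_le_pos _ _ (pos_INR (S n)) Hb); lra).
  rewrite <- sqrt_pow2_abs. apply sqrt_le_1_alt. unfold gform.
  assert (INR (S n) * b ^ 2 <= (INR (S n) * b) ^ 2) by (assert (0 <= b ^ 2) by apply pow2_ge_0; nra).
  assert (0 <= A * (INR (S n) * b)) by (apply Rmult_le_pos; [|apply Rmult_le_pos]; lra).
  nra.
Qed.
End MetricAlgebra.

Section CurveEstimates.
Variable n : nat.
Variable f : nat -> R -> R.
Variable eta : R -> R -> R.
Hypothesis f_smooth : forall j : nat, (1 <= j <= n)%nat -> smooth1 (f j).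
Hypothesis eta_smooth : smooth2 eta.
Hypothesis eta_pos : forall x u, 0 < eta x u.
Hypothesis eta_axis : forall x, eta x 0 = 1.
Hypothesis scal_le : forall x u : R, -2 * eta_uu eta x u / eta x u <= -2.
Hypothesis curvature_axis : forall x : R, Rabs (eta_u eta x 0) <= 1.

Variables (cx : R -> R) (cv : nat -> R -> R) (P Q : Pt).
Hypothesis curve : curve_from_to n cx cv P Q.

Let g := length_density n f eta cx cv.
Let L := RInt g 0 1.

Lemma curve_base_C1 : Defs.C1 cx.
Proof. exact (proj1 curve). Qed.

Lemma curve_fibre_C1 (j : nat) : (j <= n)%nat -> Defs.C1 (cv j).
Proof. exact (proj1 (proj2 curve) j). Qed.

Lemma density_continuous (t : R) : continuous g t.
Proof.
  exact (length_density_continuous n f eta f_smooth eta_smooth cx cv t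
           curve_base_C1 curve_fibre_C1).
Qed.

Lemma density_nonneg (t : R) : 0 <= g t.
Proof. apply sqrt_pos. Qed.

Lemma length_nonneg : 0 <= L.
Proof.
  apply RInt_ge_0; [lra | | intros; apply density_nonneg].
  apply (ex_RInt_continuous (V:=R_CompleteNormedModule)); intros; apply density_continuous.
Qed.

Definition fibre_bracket (t : R) : R := bracket n (fun j => cv j t).

(** d<v>/dt = (sum_j v_j v_j') / <v> = (sum_j v_j (v_j' + coef_j x')) / <v> by
    [coef_orthogonal], and each v_j' + coef_j x' is bounded by the speed. *)
Lemma fibre_bracket_drift (s : R) : 0 <= s <= 1 ->
  Rabs (fibre_bracket s - fibre_bracket 0) <= INR (S n) * L.
Proof.
  set (dS2 := fun t => sum_f_R0 (fun j => INR 2 * Derive (cv j) t * cv j t ^ 1) n).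
  apply (displacement_le_integral fibre_bracket (fun t => dS2 t / (2 * fibre_bracket t)) g);
    auto using pos_INR, density_continuous, density_nonneg.
  - intros t Ht. apply is_derive_sqrt; [|pose proof (bracket_sq_ge1 n (fun j => cv j t)); lra].
    assert (Hsum : is_derive (fun t => sum_f_R0 (fun j => cv j t ^ 2) n) t (dS2 t)).
    { apply (is_derive_sum_f_R0 (fun j t => cv j t ^ 2)
               (fun j t => INR 2 * Derive (cv j) t * cv j t ^ 1)).
      intros j Hj. apply is_derive_pow, Derive_correct, curve_fibre_C1, Hj. }
    rewrite <- (Rplus_0_l (dS2 t)).
    exact (is_derive_plus (fun _ => 1) _ t _ _ (is_derive_const 1 t) Hsum).
  - intros t Ht.
    set (v := fun j => cv j t). set (N := fibre_bracket t).
    set (om := fun j => Derive (cv j) t + coef n f (cx t) v j * Derive cx t).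
    assert (HN : 1 <= N) by apply bracket_ge1.
    assert (Edot : dS2 t = 2 * sum_f_R0 (fun j => v j * om j) n).
    { unfold om.
      rewrite (sum_eq _ (fun j => v j * Derive (cv j) t + (v j * coef n f (cx t) v j) * Derive cx t))
        by (intros; ring).
      rewrite sum_plus, <- (scal_sum (fun j => v j * coef n f (cx t) v j)), coef_orthogonal.
      rewrite Rmult_0_r, Rplus_0_r, scal_sum.
      apply sum_eq. intros; unfold v; simpl; ring. }
    assert (Hdot : Rabs (sum_f_R0 (fun j => v j * om j) n) <= N * g t * INR (S n)).
    { eapply Rle_trans; [apply sum_f_R0_triangle|]. rewrite <- sum_cte.
      apply sum_Rle. intros j Hj. rewrite Rabs_mult.
      apply Rmult_le_compat; try apply Rabs_pos.
      - apply abs_le_bracket, Hj.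
      - exact (fibre_speed_le n f eta (cx t) v (Derive cx t) (fun j => Derive (cv j) t) j Hj). }
    rewrite Edot.
    replace (2 * sum_f_R0 (fun j => v j * om j) n / (2 * N))
      with (sum_f_R0 (fun j => v j * om j) n / N) by (field; lra).
    unfold Rdiv. rewrite Rabs_mult, Rabs_inv, (Rabs_pos_eq N) by lra.
    apply (Rmult_le_reg_r N); [lra|]. rewrite Rmult_assoc, Rinv_l by lra. nra.
Qed.

Let B := bracket n (snd P) + INR (S n) * L.

Lemma fibre_bracket_le (s : R) : 0 <= s <= 1 -> fibre_bracket s <= B.
Proof.
  intros Hs. pose proof (fibre_bracket_drift s Hs) as Hd. apply Rabs_le_between in Hd.
  assert (E : fibre_bracket 0 = bracket n (snd P)).
  { destruct curve as (_ & _ & _ & Hv0 & _). apply bracket_ext, Hv0. }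
  unfold B. lra.
Qed.

Lemma eta_along_ge (t : R) : 0 <= t <= 1 -> exp (- B) <= eta (cx t) (cv 0%nat t).
Proof.
  intros Ht. eapply Rle_trans; [|apply (eta_lower_bound eta); auto].
  assert (Rabs (cv 0%nat t) <= B).
  { eapply Rle_trans; [apply (abs_le_bracket n (fun j => cv j t)); lia | apply fibre_bracket_le, Ht]. }
  apply exp_le_of_le. lra.
Qed.

(** Since eta >= exp(-B), the base speed |x'| is at most exp(B) times the g-speed. *)
Lemma base_velocity_le (t : R) : 0 <= t <= 1 -> Rabs (Derive cx t) <= exp B * g t.
Proof.
  intros Ht. pose proof (eta_along_ge t Ht) as Heta.
  pose proof (base_speed_le n f eta (cx t) (fun j => cv j t) (Derive cx t)
                (fun j => Derive (cv j) t)) as Hbase.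
  rewrite Rabs_pos_eq in Hbase by (left; apply eta_pos).
  replace (Rabs (Derive cx t)) with (exp B * (exp (- B) * Rabs (Derive cx t)))
    by (rewrite <- Rmult_assoc, <- exp_plus, Rplus_opp_r, exp_0; ring).
  apply Rmult_le_compat_l; [left; apply exp_pos|].
  eapply Rle_trans; [|exact Hbase]. apply Rmult_le_compat_r; [apply Rabs_pos | exact Heta].
Qed.

Lemma base_displacement (s : R) : 0 <= s <= 1 -> Rabs (cx s - cx 0) <= exp B * L.
Proof.
  apply (displacement_le_integral cx (Derive cx) g (exp B));
    auto using density_continuous, density_nonneg, base_velocity_le.
  - left; apply exp_pos.
  - intros t _. apply Derive_correct, curve_base_C1.
Qed.

(** The fibre velocity is the g-controlled part v_j' + coef_j x' minus coef_j x',
    and coef_j is bounded on the region swept out by the curve. *)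
Lemma fibre_displacement (j : nat) (Fm : R) : (j <= n)%nat -> 0 <= Fm ->
  (forall y, Rabs (y - cx 0) <= exp B * L -> forall i, Rabs (fz n f i y) <= Fm) ->
  forall s, 0 <= s <= 1 -> Rabs (cv j s - cv j 0) <= (1 + 2 * B * Fm * exp B) * L.
Proof.
  intros Hj HFm HF.
  assert (HB : 1 <= B).
  { pose proof (fibre_bracket_le 0 ltac:(lra)). pose proof (bracket_ge1 n (fun j => cv j 0)).
    unfold fibre_bracket in *. lra. }
  assert (HK : 0 <= 2 * B * Fm * exp B)
    by (apply Rmult_le_pos; [apply Rmult_le_pos|left; apply exp_pos]; lra).
  apply (displacement_le_integral (cv j) (Derive (cv j)) g);
    auto using density_continuous, density_nonneg; [lra | intros t _; apply Derive_correct, curve_fibre_C1, Hj |].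
  intros t Ht. set (v := fun j => cv j t).
  assert (Hom : Rabs (Derive (cv j) t + coef n f (cx t) v j * Derive cx t) <= g t)
    by exact (fibre_speed_le n f eta (cx t) v (Derive cx t) (fun j => Derive (cv j) t) j Hj).
  assert (Hco : Rabs (coef n f (cx t) v j) <= 2 * B * Fm).
  { apply coef_abs_le.
    - intros k. eapply Rle_trans; [apply vz_abs_le_bracket | apply fibre_bracket_le, Ht].
    - apply HF, base_displacement, Ht. }
  assert (Hcx : Rabs (coef n f (cx t) v j) * Rabs (Derive cx t) <= (2 * B * Fm) * (exp B * g t))
    by (apply Rmult_le_compat; auto using Rabs_pos, base_velocity_le).
  replace (Derive (cv j) t) with
    ((Derive (cv j) t + coef n f (cx t) v j * Derive cx t) - coef n f (cx t) v j * Derive cx t)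
    by ring.
  unfold Rminus. eapply Rle_trans; [apply Rabs_triang|]. rewrite Rabs_Ropp, Rabs_mult. lra.
Qed.
End CurveEstimates.

Lemma curve_estimates (n : nat) (f : nat -> R -> R) (eta : R -> R -> R)
    (cx : R -> R) (cv : nat -> R -> R) (P Q : Pt) :
  (forall j : nat, (1 <= j <= n)%nat -> smooth1 (f j)) -> smooth2 eta ->
  (forall x u, 0 < eta x u) -> (forall x, eta x 0 = 1) ->
  (forall x u : R, -2 * eta_uu eta x u / eta x u <= -2) ->
  (forall x : R, Rabs (eta_u eta x 0) <= 1) ->
  curve_from_to n cx cv P Q ->
  let L := curve_length n eta f cx cv in
  let B := bracket n (snd P) + INR (S n) * L in
  0 <= L /\ bracket n (snd Q) <= B /\ Rabs (fst Q - fst P) <= exp B * L /\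
  (forall Fm, 0 <= Fm ->
    (forall y, Rabs (y - fst P) <= exp B * L -> forall i, Rabs (fz n f i y) <= Fm) ->
    forall j, (j <= n)%nat -> Rabs (snd Q j - snd P j) <= (1 + 2 * B * Fm * exp B) * L).
Proof.
  intros Hf Hs Hpos H0 Hsc Hd0 Hc L B.
  pose proof Hc as (Hx & Hv & Hx0 & Hv0 & Hx1 & Hv1).
  split; [|split; [|split]].
  - apply (length_nonneg n f eta Hf Hs cx cv P Q Hc).
  - replace (bracket n (snd Q)) with (fibre_bracket n cv 1) by (apply bracket_ext; auto).
    apply (fibre_bracket_le n f eta Hf Hs cx cv P Q Hc). lra.
  - rewrite <- Hx1, <- Hx0. apply (base_displacement n f eta Hf Hs Hpos H0 Hsc Hd0 cx cv P Q Hc). lra.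
  - intros Fm HFm HF j Hj. rewrite <- Hv1, <- Hv0 by auto.
    apply (fibre_displacement n f eta Hf Hs Hpos H0 Hsc Hd0 cx cv P Q Hc); auto.
    + rewrite Hx0. exact HF.
    + lra.
Qed.

Lemma rdist_le_length (n : nat) eta f (p q : Pt) (cx : R -> R) (cv : nat -> R -> R) :
  curve_from_to n cx cv p q -> Rbar_le (rdist n eta f p q) (curve_length n eta f cx cv).
Proof.
  intros Hc. apply (Glb_Rbar_correct (fun L => exists cx cv, curve_from_to n cx cv p q /\
                                         L = curve_length n eta f cx cv)).
  exists cx, cv; auto.
Qed.

Lemma curve_of_rdist_lt (n : nat) eta f (p q : Pt) (eps : R) :
  Rbar_lt (rdist n eta f p q) eps ->
  exists cx cv, curve_from_to n cx cv p q /\ curve_length n eta f cx cv < eps.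
Proof.
  intros H. apply NNPP. intros Hn.
  assert (Hge : Rbar_le eps (rdist n eta f p q)).
  { apply (Glb_Rbar_correct (fun L => exists cx cv, curve_from_to n cx cv p q /\
                                         L = curve_length n eta f cx cv)).
    intros L [cx [cv [Hc ->]]]. simpl. apply Rnot_lt_le. intros Hl. apply Hn. exists cx, cv; auto. }
  apply (Rbar_lt_not_le _ _ H Hge).
Qed.

Definition segment (a b t : R) : R := a + t * (b - a).

Lemma Derive_segment (a b t : R) : Derive (segment a b) t = b - a.
Proof. apply is_derive_unique. unfold segment. auto_derive; auto; ring. Qed.

Lemma segment_C1 (a b : R) : Defs.C1 (segment a b).
Proof.
  intros t. split; [unfold segment; auto_derive; auto|].
  apply (continuous_ext (fun _ => b - a)); [intros; rewrite Derive_segment; auto | apply continuous_const_R].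
Qed.

Lemma segment_dist (a b t : R) : 0 <= t <= 1 -> Rabs (segment a b t - b) <= Rabs (a - b).
Proof.
  intros Ht. unfold segment.
  replace (a + t * (b - a) - b) with ((1 - t) * (a - b)) by ring.
  rewrite Rabs_mult, Rabs_pos_eq by lra.
  pose proof (Rabs_pos (a - b)). nra.
Qed.

Lemma segment_curve (n : nat) (Q : Pt) (xs : R) (vs : nat -> R) :
  curve_from_to n (segment (fst Q) xs) (fun j => segment (snd Q j) (vs j)) Q (xs, vs).
Proof. unfold segment. repeat split; intros; try apply segment_C1; simpl; ring. Qed.

Lemma vz_abs_le_of_near (n : nat) (w vs : nat -> R) (d : R) : d <= 1 ->
  (forall k, (k <= n)%nat -> Rabs (w k - vs k) <= d) ->
  forall k, Rabs (vz n w k) <= sum_f_R0 (fun k => Rabs (vs k)) n + 1.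
Proof.
  intros Hd Hw k.
  pose proof (cond_pos_sum (fun k => Rabs (vs k)) n (fun i => Rabs_pos _)).
  unfold vz. destruct (Nat.leb k n) eqn:E; [|rewrite Rabs_R0; lra].
  apply Nat.leb_le in E. pose proof (Hw k E).
  pose proof (term_le_sum (fun k => Rabs (vs k)) n k (fun i => Rabs_pos _) E).
  replace (w k) with (vs k + (w k - vs k)) by ring.
  eapply Rle_trans; [apply Rabs_triang|]. lra.
Qed.

(** Near a point (xs, vs) the distance is bounded by a multiple of the coordinate
    distance: the straight segment has speed O(d) as long as eta and the f_j are
    bounded on a coordinate box around (xs, vs). *)
Lemma rdist_le_coordinate_dist (n : nat) (f : nat -> R -> R) (eta : R -> R -> R)
    (xs : R) (vs : nat -> R) (d0 H Fm : R) (Q : Pt) (d : R) :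
  (forall j : nat, (1 <= j <= n)%nat -> smooth1 (f j)) -> smooth2 eta ->
  (forall x u, 0 < eta x u) -> 0 < d0 <= 1 -> 0 <= Fm ->
  (forall x u, Rabs (x - xs) <= d0 -> Rabs (u - vs 0%nat) <= d0 -> eta x u <= H) ->
  (forall y, Rabs (y - xs) <= d0 -> forall i, Rabs (fz n f i y) <= Fm) ->
  0 <= d <= d0 -> Rabs (fst Q - xs) <= d -> (forall j, (j <= n)%nat -> Rabs (snd Q j - vs j) <= d) ->
  Rbar_le (rdist n eta f Q (xs, vs))
    ((H + INR (S n) * (1 + 2 * (sum_f_R0 (fun k => Rabs (vs k)) n + 1) * Fm)) * d).
Proof.
  intros Hf Hs Hpos Hd0 HFm HH HF Hd HQx HQv.
  set (V := sum_f_R0 (fun k => Rabs (vs k)) n + 1).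
  set (cx := segment (fst Q) xs).
  set (cv := fun j => segment (snd Q j) (vs j)).
  assert (Hc : curve_from_to n cx cv Q (xs, vs)) by apply segment_curve.
  eapply Rbar_le_trans; [apply (rdist_le_length _ _ _ _ _ _ _ Hc)|]. unfold Rbar_le, curve_length.
  apply RInt_01_le.
  { intros t. exact (length_density_continuous n f eta Hf Hs cx cv t (proj1 Hc) (proj1 (proj2 Hc))). }
  intros t Ht. unfold length_density.
  assert (Hxt : Rabs (cx t - xs) <= d) by (eapply Rle_trans; [apply segment_dist, Ht | exact HQx]).
  assert (Hvt : forall k, (k <= n)%nat -> Rabs (cv k t - vs k) <= d)
    by (intros k Hk; eapply Rle_trans; [apply segment_dist, Ht | apply HQv, Hk]).
  assert (Hvz : forall k, Rabs (vz n (fun j => cv j t) k) <= V)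
    by (apply (vz_abs_le_of_near n _ vs d); [lra | exact Hvt]).
  assert (HV : 0 <= V) by (pose proof (Rabs_pos (vz n (fun j => cv j t) 0)); specialize (Hvz 0%nat); lra).
  assert (HH0 : 0 <= H).
  { pose proof (Hpos xs (vs 0%nat)). pose proof (HH xs (vs 0%nat)).
    rewrite !Rminus_eq_0, Rabs_R0 in *. lra. }
  replace ((H + INR (S n) * (1 + 2 * V * Fm)) * d)
    with (H * d + INR (S n) * ((1 + 2 * V * Fm) * d)) by ring.
  apply speed_le_of_components.
  - apply Rmult_le_pos; lra.
  - apply Rmult_le_pos; [|lra]. pose proof (Rmult_le_pos V Fm HV HFm). lra.
  - unfold cx at 2. rewrite Derive_segment, Rabs_pos_eq by (left; apply Hpos). rewrite Rabs_minus_sym.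
    apply Rmult_le_compat; auto using Rabs_pos; [left; apply Hpos|].
    apply HH; [lra | pose proof (Hvt 0%nat ltac:(lia)); unfold cv in *; lra].
  - intros j Hj. unfold cx at 2, cv at 1. rewrite !Derive_segment.
    assert (Hco : Rabs (coef n f (cx t) (fun j => cv j t) j) <= 2 * V * Fm)
      by (apply coef_abs_le; [exact Hvz | apply HF; lra]).
    eapply Rle_trans; [apply Rabs_triang|].
    rewrite Rabs_mult, !(Rabs_minus_sym _ (snd Q _)), (Rabs_minus_sym xs).
    pose proof (HQv j Hj).
    assert (Rabs (coef n f (cx t) (fun j => cv j t) j) * Rabs (fst Q - xs) <= 2 * V * Fm * d)
      by (apply Rmult_le_compat; auto using Rabs_pos).
    lra.
Qed.

Lemma fz_bounded_near (n : nat) (f : nat -> R -> R) (c r : R) :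
  (forall j : nat, (1 <= j <= n)%nat -> smooth1 (f j)) -> 0 <= r ->
  exists Fm, 0 <= Fm /\ forall y, Rabs (y - c) <= r -> forall i, Rabs (fz n f i y) <= Fm.
Proof.
  intros Hf Hr.
  set (Phi := fun y => sum_f_R0 (fun i => Rabs (fz n f i y)) n).
  destruct (continuity_ab_maj Phi (c - r) (c + r)) as [Mx [HMx _]]; [lra | |].
  { intros y _. apply continuity_pt_filterlim.
    apply (continuous_sum_R (fun i y => Rabs (fz n f i y))). intros i _.
    apply continuous_Rabs_comp, (fz_continuous n f Hf). }
  exists (Phi Mx). split; [apply cond_pos_sum; intros; apply Rabs_pos|].
  intros y Hy i. apply Rabs_le_between in Hy.
  apply (Rle_trans _ (Phi y)); [|apply HMx; lra].
  destruct (Compare_dec.le_lt_dec i n) as [Hi | Hi].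
  - apply (term_le_sum (fun i => Rabs (fz n f i y)) n i (fun _ => Rabs_pos _) Hi).
  - unfold fz. destruct (Nat.eqb i 0); [|rewrite (proj2 (Nat.leb_gt i n) Hi)];
      rewrite Rabs_R0; apply cond_pos_sum; intros; apply Rabs_pos.
Qed.

Lemma eta_bounded_near (eta : R -> R -> R) (xs us : R) : smooth2 eta ->
  exists d, 0 < d /\ forall x u, Rabs (x - xs) <= d -> Rabs (u - us) <= d ->
                          eta x u <= eta xs us + 1.
Proof.
  intros Hs.
  destruct (proj1 (Hs nil xs us) (ball (eta xs us) (mkposreal 1 Rlt_0_1)) (locally_ball _ _))
    as [e He].
  exists (e / 2). split; [apply Rdiv_lt_0_compat; [apply cond_pos | lra]|].
  intros x u Hx Hu. pose proof (cond_pos e).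
  assert (Hb : Rabs (eta x u - eta xs us) < 1).
  { apply (He (x, u)); split; [change (Rabs (x - xs) < e) | change (Rabs (u - us) < e)]; lra. }
  apply Rabs_lt_between in Hb. lra.
Qed.

Lemma eventually_forall_le (Pj : nat -> nat -> Prop) (m : nat) :
  (forall j, (j <= m)%nat -> exists N, forall k, (N <= k)%nat -> Pj j k) ->
  exists N, forall k, (N <= k)%nat -> forall j, (j <= m)%nat -> Pj j k.
Proof.
  induction m as [|m IH]; intros H.
  - destruct (H 0%nat ltac:(lia)) as [N HN].
    exists N. intros k Hk j Hj. replace j with 0%nat by lia. auto.
  - destruct IH as [N1 H1]; [intros; apply H; lia|].
    destruct (H (S m) ltac:(lia)) as [N2 H2].
    exists (max N1 N2). intros k Hk j Hj.
    destruct (Nat.eq_dec j (S m)) as [->|]; [apply H2 | apply H1]; lia.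
Qed.

(** Completeness: an rdist-Cauchy sequence has Cauchy coordinates (by the curve
    estimates, on a tail where the bracket and the base point stay bounded), the
    coordinate limit exists, and the sequence converges to it in rdist (by the
    comparison of rdist with coordinate distance near the limit). *)
Section Completeness.
Variable n : nat.
Variable f : nat -> R -> R.
Variable eta : R -> R -> R.
Hypothesis f_smooth : forall j : nat, (1 <= j <= n)%nat -> smooth1 (f j).
Hypothesis eta_smooth : smooth2 eta.
Hypothesis eta_pos : forall x u, 0 < eta x u.
Hypothesis eta_axis : forall x, eta x 0 = 1.
Hypothesis scal_le : forall x u : R, -2 * eta_uu eta x u / eta x u <= -2.
Hypothesis curvature_axis : forall x : R, Rabs (eta_u eta x 0) <= 1.

Lemma rcauchy_tail_bounded (P : nat -> Pt) : rcauchy n eta f P ->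
  exists N B0, 0 <= B0 /\ forall k, (N <= k)%nat ->
    bracket n (snd (P k)) <= B0 /\ Rabs (fst (P k) - fst (P N)) <= exp B0.
Proof.
  intros HP. destruct (HP 1 Rlt_0_1) as [N HN].
  exists N, (bracket n (snd (P N)) + INR (S n)).
  split; [pose proof (bracket_ge1 n (snd (P N))); pose proof (pos_INR (S n)); lra|].
  intros k Hk.
  destruct (curve_of_rdist_lt _ _ _ _ _ _ (HN N k (Nat.le_refl _) Hk)) as [cx [cv [Hc HL]]].
  destruct (curve_estimates n f eta cx cv (P N) (P k) f_smooth eta_smooth eta_pos eta_axis
              scal_le curvature_axis Hc) as [HL0 [Hbr [Hx _]]].
  set (L := curve_length n eta f cx cv) in *.
  assert (HnL : INR (S n) * L <= INR (S n)) by (pose proof (pos_INR (S n)); nra).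
  split; [lra|].
  eapply Rle_trans; [exact Hx|].
  rewrite <- (Rmult_1_r (exp (_ + INR (S n)))).
  apply Rmult_le_compat; [left; apply exp_pos | exact HL0 | apply exp_le_of_le; lra | lra].
Qed.

Lemma rcauchy_tail_lipschitz (P : nat -> Pt) : rcauchy n eta f P ->
  exists N Kc, 0 < Kc /\ forall k m cx cv, (N <= k)%nat -> (N <= m)%nat ->
    curve_from_to n cx cv (P k) (P m) -> curve_length n eta f cx cv <= 1 ->
    let L := curve_length n eta f cx cv in
    Rabs (fst (P m) - fst (P k)) <= Kc * L /\
    forall j, (j <= n)%nat -> Rabs (snd (P m) j - snd (P k) j) <= Kc * L.
Proof.
  intros HP. destruct (rcauchy_tail_bounded P HP) as [N [B0 [HB0 Htail]]].
  set (B1 := B0 + INR (S n)).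
  destruct (fz_bounded_near n f (fst (P N)) (exp B0 + exp B1) f_smooth)
    as [Fm [HFm HF]]; [pose proof (exp_pos B0); pose proof (exp_pos B1); lra|].
  assert (HB1 : 0 <= B1) by (pose proof (pos_INR (S n)); unfold B1; lra).
  assert (HK : 0 <= 2 * B1 * Fm * exp B1)
    by (apply Rmult_le_pos; [apply Rmult_le_pos|left; apply exp_pos]; lra).
  exists N, (exp B1 + (1 + 2 * B1 * Fm * exp B1)).
  split; [pose proof (exp_pos B1); lra|].
  intros k m cx cv Hk Hm Hc HL1 L.
  destruct (curve_estimates n f eta cx cv (P k) (P m) f_smooth eta_smooth eta_pos eta_axis
              scal_le curvature_axis Hc) as [HL0 [_ [Hx Hv]]].
  fold L in HL1, HL0, Hx, Hv. set (B := bracket n (snd (P k)) + INR (S n) * L) in *.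
  destruct (Htail k Hk) as [Hbr Hxk].
  assert (HBB : 0 <= B <= B1).
  { pose proof (bracket_ge1 n (snd (P k))).
    assert (INR (S n) * L <= INR (S n) * 1) by (apply Rmult_le_compat_l; [apply pos_INR | lra]).
    pose proof (Rmult_le_pos _ _ (pos_INR (S n)) HL0). unfold B, B1. lra. }
  assert (HeB : exp B * L <= exp B1 * L) by (apply Rmult_le_compat_r; [|apply exp_le_of_le]; lra).
  assert (HKB : 2 * B * Fm * exp B <= 2 * B1 * Fm * exp B1).
  { apply Rmult_le_compat; [| left; apply exp_pos | | apply exp_le_of_le; lra].
    - apply Rmult_le_pos; lra.
    - apply Rmult_le_compat_r; lra. }
  split.
  - pose proof (Rmult_le_pos _ _ (Rle_0_1) HL0). nra.
  - assert (HFk : forall y, Rabs (y - fst (P k)) <= exp B * L ->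
                          forall i, Rabs (fz n f i y) <= Fm).
    { intros y Hy i. apply HF.
      replace (y - fst (P N)) with ((y - fst (P k)) + (fst (P k) - fst (P N))) by ring.
      eapply Rle_trans; [apply Rabs_triang|].
      assert (exp B1 * L <= exp B1) by (pose proof (exp_pos B1); nra). lra. }
    intros j Hj. eapply Rle_trans; [exact (Hv Fm HFm HFk j Hj)|].
    assert (0 <= exp B1 * L) by (apply Rmult_le_pos; [left; apply exp_pos | lra]). nra.
Qed.

Lemma rcauchy_coordinates_cauchy (P : nat -> Pt) : rcauchy n eta f P ->
  ex_lim_seq_cauchy (fun k => fst (P k)) /\
  forall j, (j <= n)%nat -> ex_lim_seq_cauchy (fun k => snd (P k) j).
Proof.
  intros HP. destruct (rcauchy_tail_lipschitz P HP) as [N1 [Kc [HKc Hlip]]].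
  assert (Hclose : forall eps : posreal, exists N, forall k m, (N <= k)%nat -> (N <= m)%nat ->
            Rabs (fst (P m) - fst (P k)) < eps /\
            forall j, (j <= n)%nat -> Rabs (snd (P m) j - snd (P k) j) < eps).
  { intros eps. pose proof (cond_pos eps).
    set (e := Rmin (eps / (2 * Kc)) 1).
    assert (He : 0 < e) by (apply Rmin_pos; [apply Rdiv_lt_0_compat|]; lra).
    assert (HKe : Kc * e <= eps / 2).
    { replace (eps / 2) with (Kc * (eps / (2 * Kc))) by (field; lra).
      apply Rmult_le_compat_l; [lra | apply Rmin_l]. }
    destruct (HP e He) as [N2 HN2]. exists (max N1 N2). intros k m Hk Hm.
    destruct (curve_of_rdist_lt _ _ _ _ _ _ (HN2 k m ltac:(lia) ltac:(lia))) as [cx [cv [Hc HL]]].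
    assert (HL1 : curve_length n eta f cx cv <= 1) by (assert (e <= 1) by apply Rmin_r; lra).
    assert (HKL : Kc * curve_length n eta f cx cv < Kc * e) by (apply Rmult_lt_compat_l; lra).
    destruct (Hlip k m cx cv ltac:(lia) ltac:(lia) Hc HL1) as [Hx Hv].
    split; [|intros j Hj; specialize (Hv j Hj)]; lra. }
  split.
  - intros eps. destruct (Hclose eps) as [N HN]. exists N. intros k m Hk Hm.
    exact (proj1 (HN m k Hm Hk)).
  - intros j Hj eps. destruct (Hclose eps) as [N HN]. exists N. intros k m Hk Hm.
    exact (proj2 (HN m k Hm Hk) j Hj).
Qed.

Lemma rconverges_of_coordinates (P : nat -> Pt) (xs : R) (vs : nat -> R) :
  is_lim_seq (fun k => fst (P k)) xs ->
  (forall j, (j <= n)%nat -> is_lim_seq (fun k => snd (P k) j) (vs j)) ->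
  rconverges n eta f P (xs, vs).
Proof.
  intros Hx Hv.
  destruct (eta_bounded_near eta xs (vs 0%nat) eta_smooth) as [d1 [Hd1 HH]].
  destruct (fz_bounded_near n f xs 1 f_smooth) as [Fm [HFm HF]]; [lra|].
  set (d0 := Rmin d1 1).
  assert (Hd0 : 0 < d0 <= 1) by (split; [apply Rmin_pos | apply Rmin_r]; lra).
  assert (Hd01 : d0 <= d1) by apply Rmin_l.
  set (V := sum_f_R0 (fun k => Rabs (vs k)) n + 1).
  set (Kl := eta xs (vs 0%nat) + 1 + INR (S n) * (1 + 2 * V * Fm)).
  assert (HKl : 0 < Kl).
  { pose proof (eta_pos xs (vs 0%nat)). pose proof (pos_INR (S n)).
    pose proof (cond_pos_sum (fun k => Rabs (vs k)) n (fun _ => Rabs_pos _)).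
    assert (0 <= V * Fm) by (apply Rmult_le_pos; unfold V; lra).
    assert (0 <= INR (S n) * (1 + 2 * V * Fm)) by (apply Rmult_le_pos; lra).
    unfold Kl. lra. }
  intros eps Heps.
  set (d := Rmin d0 (eps / (2 * Kl))).
  assert (Hd : 0 < d <= d0)
    by (split; [apply Rmin_pos; [|apply Rdiv_lt_0_compat] | apply Rmin_l]; lra).
  destruct (proj2 (is_lim_seq_spec _ _) Hx (mkposreal d (proj1 Hd))) as [Nx HNx].
  destruct (eventually_forall_le (fun j k => Rabs (snd (P k) j - vs j) < d) n) as [Nv HNv].
  { intros j Hj. exact (proj2 (is_lim_seq_spec _ _) (Hv j Hj) (mkposreal d (proj1 Hd))). }
  exists (max Nx Nv). intros k Hk.
  eapply Rbar_le_lt_trans.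
  - apply (rdist_le_coordinate_dist n f eta xs vs d0 (eta xs (vs 0%nat) + 1) Fm (P k) d
             f_smooth eta_smooth eta_pos Hd0 HFm).
    + intros x u Hx' Hu'. apply HH; lra.
    + intros y Hy. apply HF. lra.
    + lra.
    + left; apply HNx; lia.
    + intros j Hj. left; apply HNv; [lia | exact Hj].
  - unfold Rbar_lt. fold V Kl.
    assert (Kl * d <= Kl * (eps / (2 * Kl))) by (apply Rmult_le_compat_l; [lra | apply Rmin_r]).
    replace (Kl * (eps / (2 * Kl))) with (eps / 2) in * by (field; lra). lra.
Qed.
End Completeness.

Lemma is_lim_seq_of_cauchy (u : nat -> R) :
  ex_lim_seq_cauchy u -> is_lim_seq u (real (Lim_seq u)).
Proof. intros H. apply Lim_seq_correct', ex_lim_seq_cauchy_corr, H. Qed.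

Theorem corollary3p5 (n : nat) (f : nat -> R -> R) (eta : R -> R -> R) :
  (forall j : nat, (1 <= j <= n)%nat -> smooth1 (f j)) ->
  smooth2 eta ->
  (forall x u : R, 0 < eta x u) ->
  (forall x : R, eta x 0 = 1) ->
  (* Scal = -2 eta_uu / eta <= -2 everywhere *)
  (forall x u : R, -2 * eta_uu eta x u / eta x u <= -2) ->
  (forall x : R, Rabs (eta_u eta x 0) <= 1) ->
  metric_complete n eta f.
Proof.
  intros Hf Hs Hpos H0 Hsc Hd0 P HP.
  destruct (rcauchy_coordinates_cauchy n f eta Hf Hs Hpos H0 Hsc Hd0 P HP) as [Cx Cv].
  exists (real (Lim_seq (fun k => fst (P k))), fun j => real (Lim_seq (fun k => snd (P k) j))).
  apply (rconverges_of_coordinates n f eta Hf Hs Hpos).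
  - apply is_lim_seq_of_cauchy, Cx.
  - intros j Hj. apply is_lim_seq_of_cauchy, Cv, Hj.
Qed.
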